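(* Let $\mathcal{V}$ be a finite vocabulary and let $q$ and $p$ be probability distributions on $\mathcal{V}$ (the draft and target next-token distributions at some step, conditioned on a fixed prefix). Fix a constant $0 < w \le 1$ and define the ensemble distribution $\nu(x) = w\,p(x) + (1-w)\,q(x)$ for $x \in \mathcal{V}$. Consider the verification scheme in which a draft token $\tilde{x} \sim q$ is sampled, and then accepted with probability $b_{\nu}(\tilde{x}) = \min\{1, \nu(\tilde{x})/q(\tilde{x})\}$; if rejected, a replacement token is drawn from the fallback distribution $P_{\nu}(x) = \frac{[\nu(x)-q(x)]_+}{\sum_{x'} [\nu(x')-q(x')]_+}$. Then \[ \mathbb{P}_{\nu}(\mathrm{reject}) + \mathrm{TV}(\nu, p) = \mathrm{TV}(q, p), \] where $\mathbb{P}_{\nu}(\mathrm{reject}) = \sum_{x\in\mathcal{V}} q(x)\bigl(1 - b_{\nu}(x)\bigr)$ is the probability that the draft token $\tilde{x}\sim q$ is rejected. In this sense the pair $(\nu, P_\nu)$ attains the Pareto front of the tradeoff between rejection probability and distributional bias.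
   Context: $\mathrm{TV}(\mu_1,\mu_2) = \frac12\sum_{x\in\mathcal{V}} |\mu_1(x)-\mu_2(x)|$ denotes total variation distance between distributions on $\mathcal{V}$, and $[a]_+ = \max\{a,0\}$. The ratio $\nu(x)/q(x)$ is only needed for $x$ with $q(x)>0$ (draft tokens are sampled from $q$). *)

From mathcomp Require Import all_boot all_order all_algebra.
Set Implicit Arguments. Unset Strict Implicit. Unset Printing Implicit Defensive.
Import Order.TTheory GRing.Theory Num.Theory.
Local Open Scope ring_scope.

Section Defs.
Variables (R : realFieldType) (V : finType).

Definition is_distr (mu : V -> R) : Prop :=
  (forall x, 0 <= mu x) /\ \sum_(x : V) mu x = 1.

Definition TV (mu1 mu2 : V -> R) : R :=
  2^-1 * \sum_(x : V) `|mu1 x - mu2 x|.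

Definition pos_part (a : R) : R := Num.max a 0.

Definition ensemble (w : R) (p q : V -> R) : V -> R :=
  fun x => w * p x + (1 - w) * q x.

(* acceptance probability b_nu(x) = min(1, nu(x)/q(x)); only meaningful when
   q x > 0 (draft tokens are sampled from q); set to 1 otherwise. *)
Definition accept_prob (nu q : V -> R) (x : V) : R :=
  if 0 < q x then Num.min 1 (nu x / q x) else 1.

Definition fallback (nu q : V -> R) (x : V) : R :=
  pos_part (nu x - q x) / \sum_(x' : V) pos_part (nu x' - q x').

Definition reject_prob (nu q : V -> R) : R :=
  \sum_(x : V) q x * (1 - accept_prob nu q x).

End Defs.

(* Rejecting a draft from q in favour of nu costs exactly the mass q puts above
   nu, i.e. TV(q, nu). Since q - nu = w (q - p) and nu - p = (1 - w)(q - p), the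
   two terms are w TV(q, p) and (1 - w) TV(q, p), which add up to TV(q, p). *)
From mathcomp Require Import all_boot all_order all_algebra.
From mathcomp Require Import ring.
Set Implicit Arguments. Unset Strict Implicit. Unset Printing Implicit Defensive.
Import Order.TTheory GRing.Theory Num.Theory.
Local Open Scope ring_scope.

Section RejectionTV.
Variables (R : realFieldType) (V : finType).
Implicit Types (mu nu p q : V -> R) (w : R).

Lemma pos_partE (a : R) : pos_part a = 2^-1 * (`|a| + a).
Proof.
rewrite /pos_part; case: (lerP 0 a) => a0.
  by rewrite ger0_norm //; field.
by rewrite ltr0_norm //; field.
Qed.

Lemma sum_pos_part_subr mu nu :
  \sum_x mu x = \sum_x nu x -> \sum_x pos_part (mu x - nu x) = TV mu nu.
Proof.
move=> sum_eq; under eq_bigr do rewrite pos_partE.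
by rewrite -mulr_sumr big_split /= sumrB sum_eq subrr addr0.
Qed.

Lemma mul_reject_prob nu q x : 0 <= q x -> 0 <= nu x ->
  q x * (1 - accept_prob nu q x) = pos_part (q x - nu x).
Proof.
move=> q0 nu0; rewrite /accept_prob /pos_part; case: ifP => [qpos|].
  case: (lerP (nu x) (q x)) => nu_q.
    rewrite min_r ?ler_pdivrMr ?mul1r // max_l ?subr_ge0 //.
    by field; rewrite gt_eqF.
  by rewrite min_l ?ler_pdivlMr ?mul1r ?ltW // subrr mulr0 max_r // subr_le0 ltW.
move/negbT; rewrite -leNgt => q_le0.
have -> : q x = 0 by apply/eqP; rewrite eq_le q_le0 q0.
by rewrite mul0r sub0r max_r // oppr_le0.
Qed.

Lemma reject_probE nu q : is_distr nu -> is_distr q -> reject_prob nu q = TV q nu.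
Proof.
move=> [nu0 nu1] [q0 q1]; rewrite /reject_prob.
under eq_bigr do rewrite mul_reject_prob //.
by rewrite sum_pos_part_subr // q1 nu1.
Qed.

Lemma ensemble_distr w p q : 0 <= w -> w <= 1 -> is_distr p -> is_distr q ->
  is_distr (ensemble w p q).
Proof.
move=> w0 w1 [p0 p1] [q0 q1]; split=> [x|].
  by rewrite /ensemble addr_ge0 ?mulr_ge0 ?subr_ge0.
by rewrite big_split /= -!mulr_sumr p1 q1; ring.
Qed.

Lemma TV_ensemble_l w p q : w <= 1 -> TV (ensemble w p q) p = (1 - w) * TV q p.
Proof.
move=> w1; rewrite /TV [RHS]mulrCA [in RHS]mulr_sumr; congr (_ * _).
apply: eq_bigr => x _.
have -> : ensemble w p q x - p x = (1 - w) * (q x - p x) by rewrite /ensemble; ring.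
by rewrite normrM ger0_norm ?subr_ge0.
Qed.

Lemma TV_ensemble_r w p q : 0 <= w -> TV q (ensemble w p q) = w * TV q p.
Proof.
move=> w0; rewrite /TV [RHS]mulrCA [in RHS]mulr_sumr; congr (_ * _).
apply: eq_bigr => x _.
have -> : q x - ensemble w p q x = w * (q x - p x) by rewrite /ensemble; ring.
by rewrite normrM ger0_norm.
Qed.

End RejectionTV.

Theorem proposition1 (R : realFieldType) (V : finType) (p q : V -> R) (w : R) :
  is_distr p -> is_distr q -> 0 < w -> w <= 1 ->
  reject_prob (ensemble w p q) q + TV (ensemble w p q) p = TV q p.
Proof.
move=> pd qd /ltW w0 w1.
have nud := ensemble_distr w0 w1 pd qd.
by rewrite reject_probE // TV_ensemble_r // TV_ensemble_l //; ring.
Qed.
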